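(* Let $X$ be a real separable Hilbert space and $A\in\mathcal L(X)$ monotone, i.e. $\langle Ax,x\rangle\ge0$ for all $x\in X$. Consider the linear equations $Ax=y$ with $y=Ax^\dagger$, $x^\dagger\in X$. (a) These equations are locally well-posed at every $x^\dagger\in X$ if and only if $A$ is continuously invertible, i.e. $A$ is bijective with $A^{-1}\in\mathcal L(X)$; in this case $\|(A+\alpha I)^{-1}\|\le \|A^{-1}\|$ for all $\alpha>0$. (b) These equations are locally ill-posed at every $x^\dagger\in X$ if and only if $\mathcal N(A)\neq\{0\}$ or the range $\mathcal R(A)$ is not closed; in this case $\|(A+\alpha I)^{-1}\|=\frac1\alpha$ for all $\alpha>0$. Exactly one of the cases (a), (b) occurs.
   Context: $\mathcal L(X)$ denotes the Banach space of bounded linear operators $X\to X$ with operator norm. $\mathcal N(A)$ is the null space and $\mathcal R(A)$ the range of $A$. For a monotone $A\in\mathcal L(X)$ and $\alpha>0$, $A+\alpha I$ is boundedly invertible. The equation $Ax=y$ with $y=Ax^\dagger$ is called locally well-posed at $x^\dagger$ if there is $r>0$ such that for every sequence $(x_k)$ in the closed ball of radius $r$ around $x^\dagger$, $\|Ax_k-Ax^\dagger\|\to0$ implies $\|x_k-x^\dagger\|\to0$; otherwise it is locally ill-posed at $x^\dagger$. *)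

(* real Hilbert spaces are axiomatized here as real inner
   product spaces (carrier with vector-space operations and an inner product),
   together with separate predicates for completeness and separability. *)
From Stdlib Require Import Reals Lra ClassicalEpsilon.
Open Scope R_scope.

Record InnerProductSpace := {
  car :> Type;
  vzero : car;
  vadd : car -> car -> car;
  vopp : car -> car;
  vscal : R -> car -> car;
  inner : car -> car -> R;
  vadd_assoc : forall x y z, vadd x (vadd y z) = vadd (vadd x y) z;
  vadd_comm : forall x y, vadd x y = vadd y x;
  vadd_0 : forall x, vadd x vzero = x;
  vadd_opp : forall x, vadd x (vopp x) = vzero;
  vscal_1 : forall x, vscal 1 x = x;
  vscal_assoc : forall a b x, vscal a (vscal b x) = vscal (a * b) x;
  vscal_distr_v : forall a x y, vscal a (vadd x y) = vadd (vscal a x) (vscal a y);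
  vscal_distr_s : forall a b x, vscal (a + b) x = vadd (vscal a x) (vscal b x);
  inner_sym : forall x y, inner x y = inner y x;
  inner_add_l : forall x y z, inner (vadd x y) z = inner x z + inner y z;
  inner_scal_l : forall a x y, inner (vscal a x) y = a * inner x y;
  inner_pos : forall x, 0 <= inner x x;
  inner_def : forall x, inner x x = 0 -> x = vzero
}.

Arguments vzero {_}.
Arguments vadd {_} _ _.
Arguments vopp {_} _.
Arguments vscal {_} _ _.
Arguments inner {_} _ _.

Section Defs.
Context {X : InnerProductSpace}.

Definition vsub (x y : X) : X := vadd x (vopp y).
Definition norm (x : X) : R := sqrt (inner x x).

Definition converges (u : nat -> X) (l : X) : Prop :=
  forall eps, eps > 0 -> exists N, forall n, (n >= N)%nat -> norm (vsub (u n) l) < eps.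

Definition cauchy (u : nat -> X) : Prop :=
  forall eps, eps > 0 -> exists N, forall n m, (n >= N)%nat -> (m >= N)%nat ->
    norm (vsub (u n) (u m)) < eps.

Definition is_closed (S : X -> Prop) : Prop :=
  forall (u : nat -> X) (l : X), (forall n, S (u n)) -> converges u l -> S l.

Definition linear_op (A : X -> X) : Prop :=
  (forall x y, A (vadd x y) = vadd (A x) (A y)) /\
  (forall a x, A (vscal a x) = vscal a (A x)).

Definition bounded_linear (A : X -> X) : Prop :=
  linear_op A /\ exists C, forall x, norm (A x) <= C * norm x.

(* operator norm: the supremum of ||A x|| over ||x|| <= 1 (chosen classically;
   it is the least upper bound whenever this set is bounded, e.g. for A in L(X)) *)
Definition opnorm_set (A : X -> X) : R -> Prop :=
  fun r => exists x, norm x <= 1 /\ r = norm (A x).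

Definition opnorm (A : X -> X) : R :=
  epsilon (inhabits 0) (fun c => is_lub (opnorm_set A) c).

Definition monotone (A : X -> X) : Prop := forall x, 0 <= inner (A x) x.

Definition shift (A : X -> X) (alpha : R) : X -> X :=
  fun x => vadd (A x) (vscal alpha x).

Definition is_inverse (A B : X -> X) : Prop :=
  (forall x, B (A x) = x) /\ (forall y, A (B y) = y).

Definition cont_invertible (A : X -> X) : Prop :=
  exists B, is_inverse A B /\ bounded_linear B.

Definition null_space_nontrivial (A : X -> X) : Prop :=
  exists x, x <> vzero /\ A x = vzero.

Definition op_range (A : X -> X) : X -> Prop := fun y => exists x, A x = y.

Definition locally_well_posed (A : X -> X) (xd : X) : Prop :=
  exists r, r > 0 /\
    forall xs : nat -> X, (forall k, norm (vsub (xs k) xd) <= r) ->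
      Un_cv (fun k => norm (vsub (A (xs k)) (A xd))) 0 ->
      Un_cv (fun k => norm (vsub (xs k) xd)) 0.

Definition locally_ill_posed (A : X -> X) (xd : X) : Prop :=
  ~ locally_well_posed A xd.

End Defs.

Definition complete (X : InnerProductSpace) : Prop :=
  forall u : nat -> X, cauchy u -> exists l, converges u l.

Definition separable (X : InnerProductSpace) : Prop :=
  exists d : nat -> X, forall (x : X) eps, eps > 0 -> exists n, norm (vsub x (d n)) < eps.

(* Everything reduces to whether A is bounded below, |A x| >= c |x|.  Local
   well-posedness at any point is equivalent to it, since otherwise there are
   vectors of fixed length with arbitrarily small image.  Being bounded below
   means injective with closed range; for monotone A the orthogonal complement
   of the range lies in the kernel, so such an A is also surjective, and
   conversely a bounded bijection is bounded below by the bounded inverse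
   theorem (Baire).  The resolvent bounds come from |(A + aI) x| >= |A x| and
   <(A + aI) x, x> >= a |x|^2; the bound 1/a is attained along vectors of
   almost vanishing image. *)

From Stdlib Require Import Reals Lra Lia Psatz Classical ClassicalEpsilon IndefiniteDescription.
Open Scope R_scope.

Section Hilbert.
Context {X : InnerProductSpace}.
Implicit Types x y z u v w : X.

Lemma inner_zero_l z : inner (@vzero X) z = 0.
Proof. pose proof (inner_add_l X vzero vzero z) as H; rewrite vadd_0 in H; lra. Qed.

Lemma inner_opp_l x z : inner (vopp x) z = - inner x z.
Proof. pose proof (inner_add_l X x (vopp x) z) as H; rewrite vadd_opp, inner_zero_l in H; lra. Qed.

Lemma inner_sub_l x y z : inner (vsub x y) z = inner x z - inner y z.
Proof. unfold vsub; rewrite inner_add_l, inner_opp_l; ring. Qed.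

Lemma inner_add_r x y z : inner z (vadd x y) = inner z x + inner z y.
Proof. rewrite !(inner_sym X z); apply inner_add_l. Qed.

Lemma inner_scal_r a x z : inner z (vscal a x) = a * inner z x.
Proof. rewrite !(inner_sym X z); apply inner_scal_l. Qed.

Lemma inner_opp_r x z : inner z (vopp x) = - inner z x.
Proof. rewrite !(inner_sym X z); apply inner_opp_l. Qed.

Lemma inner_sub_r x y z : inner z (vsub x y) = inner z x - inner z y.
Proof. rewrite !(inner_sym X z); apply inner_sub_l. Qed.

Lemma inner_zero_r z : inner z (@vzero X) = 0.
Proof. rewrite inner_sym; apply inner_zero_l. Qed.

Hint Rewrite inner_add_l inner_scal_l inner_opp_l inner_sub_l inner_zero_l
  inner_add_r inner_scal_r inner_opp_r inner_sub_r inner_zero_r : inner.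

Lemma inner_ext u v : (forall z, inner u z = inner v z) -> u = v.
Proof.
  intros H.
  assert (E : inner (vsub u v) (vsub u v) = 0) by (rewrite inner_sub_l, !H; ring).
  apply inner_def in E; unfold vsub in E.
  rewrite <- (vadd_0 X u), <- (vadd_opp X v), (vadd_comm X v), vadd_assoc, E.
  rewrite vadd_comm; apply vadd_0.
Qed.

Ltac vector_eq := apply inner_ext; intro; autorewrite with inner; field; try lra.

Lemma eq_of_vsub_eq0 x y : vsub x y = vzero -> x = y.
Proof.
  intros H; apply inner_ext; intro z.
  pose proof (f_equal (fun w => inner w z) H) as E; cbn in E.
  autorewrite with inner in E; lra.
Qed.

Lemma norm_nonneg x : 0 <= norm x.
Proof. apply sqrt_pos. Qed.

Lemma norm_sq x : norm x * norm x = inner x x.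
Proof. apply sqrt_sqrt, inner_pos. Qed.

Lemma norm_zero : norm (@vzero X) = 0.
Proof. unfold norm; rewrite inner_zero_l; apply sqrt_0. Qed.

Lemma norm_eq0 x : norm x = 0 -> x = vzero.
Proof. intros H; apply inner_def; rewrite <- norm_sq, H; ring. Qed.

Lemma norm_pos x : x <> vzero -> 0 < norm x.
Proof. intros Hx; destruct (norm_nonneg x) as [|E]; auto; now elim Hx; apply norm_eq0. Qed.

Lemma norm_scal a x : norm (vscal a x) = Rabs a * norm x.
Proof.
  unfold norm; rewrite inner_scal_l, inner_scal_r, <- Rmult_assoc, sqrt_mult_alt.
  - f_equal; apply sqrt_Rsqr_abs.
  - apply Rle_0_sqr.
Qed.

Lemma norm_sub_sym x y : norm (vsub x y) = norm (vsub y x).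
Proof. unfold norm; f_equal; autorewrite with inner; ring. Qed.

Lemma norm_le_of_sq a b : 0 <= b -> a * a <= b * b -> a <= b.
Proof. intros; nra. Qed.

Lemma cauchy_schwarz x y : inner x y <= norm x * norm y.
Proof.
  destruct (Req_dec (inner y y) 0) as [Hy|Hy].
  - apply inner_def in Hy; subst y; rewrite inner_zero_r, norm_zero; lra.
  (* expand 0 <= <x - t y, x - t y> at the optimal t = <x,y>/<y,y> *)
  - pose proof (inner_pos X (vsub x (vscal (inner x y / inner y y) y))) as Hp.
    autorewrite with inner in Hp; rewrite (inner_sym X y x) in Hp.
    pose proof (inner_pos X y) as Hb.
    assert (Hsq : inner x y * inner x y <= inner x x * inner y y).
    { replace (inner x x - inner x y / inner y y * inner x y -
        inner x y / inner y y * (inner x y - inner x y / inner y y * inner y y))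
        with ((inner x x * inner y y - inner x y * inner x y) / inner y y) in Hp
        by (field; lra).
      apply Rmult_le_compat_r with (r := inner y y) in Hp; [|lra].
      unfold Rdiv in Hp; rewrite Rmult_assoc, Rinv_l in Hp; lra. }
    apply Rle_trans with (Rabs (inner x y)); [apply Rle_abs|].
    apply norm_le_of_sq; [apply Rmult_le_pos; apply norm_nonneg|].
    rewrite <- Rabs_mult, Rabs_right by nra.
    replace (norm x * norm y * (norm x * norm y)) with (norm x * norm x * (norm y * norm y)) by ring.
    now rewrite !norm_sq.
Qed.

Lemma norm_triangle x y : norm (vadd x y) <= norm x + norm y.
Proof.
  pose proof (norm_nonneg x); pose proof (norm_nonneg y).
  apply norm_le_of_sq; [lra|].
  rewrite norm_sq; autorewrite with inner; rewrite (inner_sym X y x).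
  pose proof (cauchy_schwarz x y) as Hcs; rewrite <- (norm_sq x), <- (norm_sq y) in *; nra.
Qed.

Lemma norm_triangle_sub x y z : norm (vsub x z) <= norm (vsub x y) + norm (vsub y z).
Proof.
  replace (vsub x z) with (vadd (vsub x y) (vsub y z)) by vector_eq.
  apply norm_triangle.
Qed.

Lemma eq0_of_norm_small x : (forall eps, eps > 0 -> norm x < eps) -> x = vzero.
Proof.
  intros H; apply norm_eq0.
  destruct (norm_nonneg x) as [Hp|]; auto; specialize (H _ Hp); lra.
Qed.

Lemma half_pow_tail C eps : 0 <= C -> eps > 0 ->
  exists N, forall n, (n >= N)%nat -> C * (/ 2) ^ n < eps.
Proof.
  intros HC He.
  destruct (pow_lt_1_zero (/ 2)) with (y := eps / (C + 1)) as [N HN].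
  - rewrite Rabs_right; lra.
  - apply Rdiv_lt_0_compat; lra.
  - exists N; intros n Hn; specialize (HN n Hn).
    rewrite Rabs_right in HN by (apply Rle_ge, pow_le; lra).
    pose proof (pow_le (/ 2) n).
    apply Rmult_lt_compat_l with (r := C + 1) in HN; [|lra].
    replace ((C + 1) * (eps / (C + 1))) with eps in HN by (field; lra); nra.
Qed.

Lemma dist_limit_le (s : nat -> X) l a b k : converges s l ->
  (forall m, (m >= k)%nat -> norm (vsub (s m) a) <= b) -> norm (vsub l a) <= b.
Proof.
  intros Hs Hb; apply Rnot_lt_le; intros H.
  destruct (Hs (norm (vsub l a) - b)) as [N HN]; [lra|].
  specialize (HN (max N k) (Nat.le_max_l _ _)); specialize (Hb (max N k) (Nat.le_max_r _ _)).
  pose proof (norm_triangle_sub l (s (max N k)) a); rewrite norm_sub_sym in HN; lra.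
Qed.

Lemma nested_balls (c : nat -> X) (r : nat -> R) : complete X ->
  (forall k, norm (vsub (c (S k)) (c k)) + r (S k) <= r k) -> (forall k, 0 <= r k) ->
  (forall eps, eps > 0 -> exists k, r k < eps) ->
  exists l, forall k, norm (vsub l (c k)) <= r k.
Proof.
  intros Hc Hstep Hr Hsmall.
  assert (Hnest : forall k d, norm (vsub (c (d + k)%nat) (c k)) + r (d + k)%nat <= r k).
  { intros k d; induction d as [|d IH].
    - cbn; replace (vsub (c k) (c k)) with (@vzero X) by vector_eq; rewrite norm_zero; lra.
    - pose proof (Hstep (d + k)%nat).
      pose proof (norm_triangle_sub (c (S d + k)%nat) (c (d + k)%nat) (c k)); cbn in *; lra. }
  assert (Hin : forall k m, (m >= k)%nat -> norm (vsub (c m) (c k)) <= r k).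
  { intros k m Hm; specialize (Hnest k (m - k)%nat).
    replace (m - k + k)%nat with m in Hnest by lia; pose proof (Hr m); lra. }
  destruct (Hc c) as [l Hl].
  - intros eps He; destruct (Hsmall (eps / 2)) as [k Hk]; [lra|].
    exists k; intros n m Hn Hm.
    pose proof (norm_triangle_sub (c n) (c k) (c m)); rewrite (norm_sub_sym (c k)) in *.
    pose proof (Hin k n Hn); pose proof (Hin k m Hm); lra.
  - exists l; intros k; exact (dist_limit_le c l (c k) (r k) k Hl (Hin k)).
Qed.

Section LinearOperator.
Variable A : X -> X.
Hypothesis HA : linear_op A.

Lemma lin_add x y : A (vadd x y) = vadd (A x) (A y).
Proof. apply HA. Qed.

Lemma lin_scal a x : A (vscal a x) = vscal a (A x).
Proof. apply HA. Qed.

Lemma lin_zero : A vzero = vzero.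
Proof.
  replace (@vzero X) with (vscal 0 (@vzero X)) by vector_eq.
  rewrite lin_scal; vector_eq.
Qed.

Lemma lin_sub x y : A (vsub x y) = vsub (A x) (A y).
Proof.
  replace (vsub x y) with (vadd x (vscal (-1) y)) by vector_eq.
  rewrite lin_add, lin_scal; vector_eq.
Qed.

End LinearOperator.

Lemma inverse_linear (A B : X -> X) : linear_op A -> is_inverse A B -> linear_op B.
Proof.
  intros HA [HBA HAB]; split.
  - intros x y; rewrite <- (HBA (vadd (B x) (B y))), (lin_add A HA), !HAB; auto.
  - intros a x; rewrite <- (HBA (vscal a (B x))), (lin_scal A HA), !HAB; auto.
Qed.

Lemma shift_linear (A : X -> X) a : linear_op A -> linear_op (shift A a).
Proof.
  intros HA; split; intros; unfold shift; [rewrite (lin_add A HA) | rewrite (lin_scal A HA)]; vector_eq.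
Qed.

Lemma bounded_linear_bound (A : X -> X) : bounded_linear A ->
  exists C, C > 0 /\ forall x, norm (A x) <= C * norm x.
Proof.
  intros [_ [C HC]]; exists (Rabs C + 1); split; [pose proof (Rabs_pos C); lra|].
  intros x; eapply Rle_trans; [apply HC|].
  apply Rmult_le_compat_r; [apply norm_nonneg | pose proof (Rle_abs C); lra].
Qed.

Definition bounded_below (A : X -> X) : Prop :=
  exists c, c > 0 /\ forall x, c * norm x <= norm (A x).

Lemma bounded_below_injective (A : X -> X) : bounded_below A ->
  forall x, A x = vzero -> x = vzero.
Proof.
  intros [c [Hc HB]] x Hx; apply norm_eq0.
  specialize (HB x); rewrite Hx, norm_zero in HB; pose proof (norm_nonneg x); nra.
Qed.

Lemma not_bounded_below_small_value (A : X -> X) c r : linear_op A -> ~ bounded_below A ->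
  c > 0 -> r > 0 -> exists z, norm z = r /\ norm (A z) < c * r.
Proof.
  intros HA HnB Hc Hr.
  destruct (not_all_ex_not _ _ (fun H => HnB (ex_intro _ c (conj Hc H)))) as [x Hx].
  apply Rnot_le_lt in Hx.
  assert (Hx0 : x <> vzero) by (intros ->; rewrite (lin_zero A HA), norm_zero in Hx; lra).
  pose proof (norm_pos x Hx0).
  exists (vscal (r / norm x) x); rewrite (lin_scal A HA), !norm_scal, Rabs_right by
    (auto; apply Rle_ge, Rlt_le, Rdiv_lt_0_compat; lra).
  split; [field; lra|].
  apply Rmult_lt_compat_l with (r := r / norm x) in Hx; [|apply Rdiv_lt_0_compat; lra].
  replace (r / norm x * (c * norm x)) with (c * r) in Hx by (field; lra); lra.
Qed.

Lemma locally_well_posed_of_bounded_below (A : X -> X) xd : linear_op A ->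
  bounded_below A -> locally_well_posed A xd.
Proof.
  intros HA [c [Hc HB]]; exists 1; split; [lra|]; intros xs _ Hcv eps He.
  destruct (Hcv (c * eps)) as [N HN]; [nra|]; exists N; intros n Hn; specialize (HN n Hn).
  unfold R_dist in *; rewrite Rminus_0_r, Rabs_right in * by (apply Rle_ge, norm_nonneg).
  rewrite <- (lin_sub A HA) in HN; specialize (HB (vsub (xs n) xd)); nra.
Qed.

(* Perturbing xd along directions z k of length r with A (z k) -> 0 violates
   well-posedness in every ball. *)
Lemma bounded_below_of_locally_well_posed (A : X -> X) xd : linear_op A ->
  locally_well_posed A xd -> bounded_below A.
Proof.
  intros HA [r [Hr Hw]]; apply NNPP; intros HnB.
  destruct (functional_choice (fun k z => norm z = r /\ norm (A z) < (/ 2) ^ k * r))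
    as [z Hz].
  { intros k; apply not_bounded_below_small_value; auto; apply pow_lt; lra. }
  assert (Ez : forall k, vsub (vadd xd (z k)) xd = z k) by (intros; vector_eq).
  assert (HAz : forall k, vsub (A (vadd xd (z k))) (A xd) = A (z k))
    by (intros k; rewrite <- (lin_sub A HA), Ez; auto).
  assert (Hball : forall k, norm (vsub (vadd xd (z k)) xd) <= r)
    by (intros k; rewrite Ez, (proj1 (Hz k)); lra).
  assert (Hsmall : Un_cv (fun k => norm (vsub (A (vadd xd (z k))) (A xd))) 0).
  { intros eps He; destruct (half_pow_tail r eps) as [N HN]; [lra|auto|].
    exists N; intros n Hn; specialize (HN n Hn); destruct (Hz n).
    unfold R_dist; rewrite HAz, Rminus_0_r, Rabs_right by (apply Rle_ge, norm_nonneg); lra. }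
  destruct (Hw _ Hball Hsmall r Hr) as [N HN]; specialize (HN N (le_n N)).
  unfold R_dist in HN; rewrite Ez, (proj1 (Hz N)), Rminus_0_r, Rabs_right in HN; lra.
Qed.

Lemma closed_range_of_bounded_below (A : X -> X) : complete X -> bounded_linear A ->
  bounded_below A -> is_closed (op_range A).
Proof.
  intros Hc HA [c [Hc0 HB]] s l Hs Hl.
  destruct (bounded_linear_bound A HA) as [C [HC HAC]].
  destruct (functional_choice (fun n x => A x = s n) Hs) as [xs Hxs].
  destruct (Hc xs) as [x Hx].
  - intros eps He; destruct (Hl (c * eps / 2)) as [N HN]; [nra|].
    exists N; intros n m Hn Hm.
    pose proof (norm_triangle_sub (s n) l (s m)); rewrite (norm_sub_sym l (s m)) in *.
    pose proof (HN n Hn); pose proof (HN m Hm).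
    specialize (HB (vsub (xs n) (xs m))); rewrite (lin_sub A (proj1 HA)), !Hxs in HB; nra.
  - exists x; apply eq_of_vsub_eq0, eq0_of_norm_small; intros eps He.
    destruct (Hx (eps / (2 * C))) as [N1 HN1]; [apply Rdiv_lt_0_compat; lra|].
    destruct (Hl (eps / 2)) as [N2 HN2]; [lra|].
    set (n := max N1 N2); specialize (HN1 n (Nat.le_max_l _ _)); specialize (HN2 n (Nat.le_max_r _ _)).
    pose proof (norm_triangle_sub (A x) (A (xs n)) l) as T.
    rewrite <- (lin_sub A (proj1 HA)), Hxs in T; specialize (HAC (vsub x (xs n))).
    rewrite norm_sub_sym in HAC.
    apply Rmult_lt_compat_l with (r := C) in HN1; [|lra].
    replace (C * (eps / (2 * C))) with (eps / 2) in HN1 by (field; lra); lra.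
Qed.

Lemma bounded_below_of_cont_invertible (A : X -> X) : cont_invertible A -> bounded_below A.
Proof.
  intros [B [[HBA _] HB]]; destruct (bounded_linear_bound B HB) as [C [HC HBC]].
  exists (/ C); split; [apply Rinv_0_lt_compat; lra|]; intros x.
  specialize (HBC (A x)); rewrite HBA in HBC.
  apply Rmult_le_reg_l with C; [lra|].
  rewrite <- Rmult_assoc, Rinv_r, Rmult_1_l; lra.
Qed.

Lemma cont_invertible_of_bijective_bounded_below (A : X -> X) : linear_op A ->
  (forall y, exists x, A x = y) -> bounded_below A -> cont_invertible A.
Proof.
  intros HA Hsurj HB.
  destruct (functional_choice (fun y x => A x = y) Hsurj) as [B HAB].
  assert (HBA : forall x, B (A x) = x).
  { intros x; apply eq_of_vsub_eq0, (bounded_below_injective A HB).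
    rewrite (lin_sub A HA), HAB; vector_eq. }
  exists B; split; [split; auto|]; split; [apply (inverse_linear A); [|split]; auto|].
  destruct HB as [c [Hc HcA]]; exists (/ c); intros y.
  specialize (HcA (B y)); rewrite HAB in HcA.
  apply Rmult_le_reg_l with c; [lra|].
  rewrite <- Rmult_assoc, Rinv_r, Rmult_1_l; lra.
Qed.

Lemma infimum_exists {T : Type} (f : T -> R) (t0 : T) : (forall t, 0 <= f t) ->
  exists d, (forall t, d <= f t) /\ forall eps, eps > 0 -> exists t, f t < d + eps.
Proof.
  intros Hf.
  destruct (completeness (fun r => exists t, r = - f t)) as [L [HLub HLleast]].
  - exists 0; intros r [t ->]; pose proof (Hf t); lra.
  - exists (- f t0), t0; reflexivity.
  - exists (- L); split.
    + intros t; pose proof (HLub _ (ex_intro _ t eq_refl)); lra.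
    + intros eps He; apply NNPP; intros Hn.
      assert (L <= L - eps); [|lra].
      apply HLleast; intros r [t ->].
      assert (~ f t < - L + eps) by (intros Ht; apply Hn; exists t; auto); lra.
Qed.

Lemma linear_coeff_zero p q : (forall t, 0 <= t * p + t * t * q) -> p = 0.
Proof.
  intros H; set (D := 1 + q * q); assert (HD : 0 < D) by (unfold D; nra).
  specialize (H (- p / D)).
  assert (H' : 0 <= (- p / D * p + - p / D * (- p / D) * q) * (D * D))
    by (apply Rmult_le_pos; nra).
  replace ((- p / D * p + - p / D * (- p / D) * q) * (D * D)) with (p * p * (q - D)) in H'
    by (field; lra).
  assert (q - D < 0) by (unfold D; nra).
  assert (Hp : p * p = 0) by nra.
  destruct (Rmult_integral _ _ Hp); auto.
Qed.

Definition midpoint_closed (M : X -> Prop) : Prop :=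
  forall u v, M u -> M v -> M (vscal (/ 2) (vadd u v)).

Lemma parallelogram_midpoint y u v :
  inner (vsub u v) (vsub u v) + 4 * inner (vsub y (vscal (/ 2) (vadd u v)))
    (vsub y (vscal (/ 2) (vadd u v)))
  = 2 * inner (vsub y u) (vsub y u) + 2 * inner (vsub y v) (vsub y v).
Proof.
  autorewrite with inner; rewrite (inner_sym X v u), (inner_sym X u y), (inner_sym X v y); field.
Qed.

Lemma minimizing_sequence_cauchy (M : X -> Prop) y d (m : nat -> X) : midpoint_closed M ->
  (forall u, M u -> d <= inner (vsub y u) (vsub y u)) -> (forall n, M (m n)) ->
  (forall n, inner (vsub y (m n)) (vsub y (m n)) < d + (/ 2) ^ n) -> cauchy m.
Proof.
  intros Hmid Hd HM Hm eps He.
  destruct (half_pow_tail 4 (eps * eps)) as [N HN]; [lra|nra|].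
  exists N; intros n k Hn Hk.
  pose proof (parallelogram_midpoint y (m n) (m k)) as P.
  pose proof (Hd _ (Hmid _ _ (HM n) (HM k))); pose proof (Hm n); pose proof (Hm k).
  pose proof (HN n Hn); pose proof (HN k Hk).
  apply Rnot_le_lt; intros Hge.
  assert (eps * eps <= inner (vsub (m n) (m k)) (vsub (m n) (m k)))
    by (rewrite <- norm_sq; nra).
  lra.
Qed.

Lemma inner_self_le_of_approx u D :
  (forall eps, eps > 0 -> exists v, norm (vsub u v) < eps /\ inner v v < D + eps) ->
  inner u u <= D.
Proof.
  intros H; apply Rle_plus_epsilon; intros eps' He'.
  set (a := norm u); pose proof (norm_nonneg u) as Ha; fold a in Ha.
  set (eps := Rmin 1 (eps' / (2 * a + 4))).
  assert (Heps : 0 < eps) by (apply Rmin_glb_lt; [lra | apply Rdiv_lt_0_compat; lra]).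
  assert (Heps1 : eps <= 1) by apply Rmin_l.
  assert (Heps2 : eps * (2 * a + 4) <= eps').
  { pose proof (Rmin_r 1 (eps' / (2 * a + 4))) as Hm; fold eps in Hm.
    apply Rmult_le_compat_r with (r := 2 * a + 4) in Hm; [|lra].
    replace (eps' / (2 * a + 4) * (2 * a + 4)) with eps' in Hm by (field; lra); lra. }
  destruct (H eps Heps) as [v [Huv Hv]].
  pose proof (norm_triangle_sub u v vzero) as T1; pose proof (norm_triangle_sub v u vzero) as T2.
  replace (vsub u vzero) with u in * by vector_eq; replace (vsub v vzero) with v in * by vector_eq.
  rewrite norm_sub_sym in T2; fold a in T1, T2; rewrite <- norm_sq in Hv |- *; fold a.
  pose proof (norm_nonneg v); nra.
Qed.

Lemma nearest_point_exists (M : X -> Prop) y u0 : complete X -> is_closed M ->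
  midpoint_closed M -> M u0 ->
  exists m, M m /\ forall u, M u -> inner (vsub y m) (vsub y m) <= inner (vsub y u) (vsub y u).
Proof.
  intros Hc Hcl Hmid Hu0.
  destruct (infimum_exists (fun u : {u | M u} => inner (vsub y (proj1_sig u)) (vsub y (proj1_sig u)))
    (exist _ u0 Hu0)) as [d [Hd Hinf]]; [intros; apply inner_pos|].
  destruct (functional_choice (fun n (u : {u | M u}) =>
    inner (vsub y (proj1_sig u)) (vsub y (proj1_sig u)) < d + (/ 2) ^ n)) as [ms Hms].
  { intros n; apply Hinf, pow_lt; lra. }
  assert (Hcau : cauchy (fun n => proj1_sig (ms n))).
  { apply (minimizing_sequence_cauchy M y d); auto.
    - intros u Hu; exact (Hd (exist _ u Hu)).
    - intros n; apply proj2_sig. }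
  destruct (Hc _ Hcau) as [m Hm].
  assert (HMm : M m) by exact (Hcl _ m (fun n => proj2_sig (ms n)) Hm).
  exists m; split; auto; intros u Hu.
  apply Rle_trans with d; [|exact (Hd (exist _ u Hu))].
  apply inner_self_le_of_approx; intros eps He.
  destruct (Hm eps He) as [N1 HN1]; destruct (half_pow_tail 1 eps) as [N2 HN2]; [lra|auto|].
  set (n := max N1 N2); exists (vsub y (proj1_sig (ms n))); split.
  - replace (vsub (vsub y m) (vsub y (proj1_sig (ms n)))) with (vsub (proj1_sig (ms n)) m)
      by vector_eq.
    apply HN1, Nat.le_max_l.
  - pose proof (Hms n); pose proof (HN2 n (Nat.le_max_r _ _)); lra.
Qed.

Lemma range_residual_orthogonal (A : X -> X) y : complete X -> linear_op A ->
  is_closed (op_range A) -> exists x, forall z, inner (vsub y (A x)) (A z) = 0.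
Proof.
  intros Hc HA Hcl.
  destruct (nearest_point_exists (op_range A) y (A vzero)) as [m [[x <-] Hmin]]; auto.
  - intros u v [xu <-] [xv <-]; exists (vscal (/ 2) (vadd xu xv)).
    rewrite (lin_scal A HA), (lin_add A HA); reflexivity.
  - exists vzero; reflexivity.
  - exists x; intros z.
    apply (Rmult_eq_reg_l (-2)); [rewrite Rmult_0_r|lra].
    apply (linear_coeff_zero _ (inner (A z) (A z))); intros t.
    specialize (Hmin _ (ex_intro _ (vadd x (vscal t z)) eq_refl)).
    rewrite (lin_add A HA), (lin_scal A HA) in Hmin.
    autorewrite with inner in Hmin |- *.
    rewrite (inner_sym X (A z) y), (inner_sym X (A z) (A x)) in Hmin; nra.
Qed.

Lemma monotone_kernel_of_orthogonal_range (A : X -> X) w : linear_op A -> monotone A ->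
  (forall z, inner w (A z) = 0) -> A w = vzero.
Proof.
  intros HA Hm Hw; apply inner_def.
  apply (linear_coeff_zero _ (inner (A (A w)) (A w))); intros t.
  specialize (Hm (vadd w (vscal t (A w)))).
  rewrite (lin_add A HA), (lin_scal A HA) in Hm; autorewrite with inner in Hm.
  rewrite (inner_sym X (A w) w), (inner_sym X (A (A w)) w), !Hw in Hm; lra.
Qed.

(* For monotone A the orthogonal complement of the range lies in the kernel,
   so a closed range is everything. *)
Lemma surjective_of_monotone_closed_range (A : X -> X) : complete X -> linear_op A ->
  monotone A -> (forall x, A x = vzero -> x = vzero) -> is_closed (op_range A) ->
  forall y, exists x, A x = y.
Proof.
  intros Hc HA Hm Hinj Hcl y.
  destruct (range_residual_orthogonal A y Hc HA Hcl) as [x Hx]; exists x.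
  symmetry; apply eq_of_vsub_eq0, Hinj, monotone_kernel_of_orthogonal_range; auto.
Qed.

Lemma norm_sub_le x y : norm (vsub x y) <= norm x + norm y.
Proof.
  replace (vsub x y) with (vadd x (vscal (-1) y)) by vector_eq.
  pose proof (norm_triangle x (vscal (-1) y)) as H; rewrite norm_scal, Rabs_left in H; lra.
Qed.

Definition nowhere_dense (S : X -> Prop) : Prop :=
  forall y0 rho, rho > 0 -> exists y eps, eps > 0 /\ norm (vsub y y0) < rho /\
    forall z, S z -> eps <= norm (vsub y z).

Lemma baire (F : nat -> X -> Prop) : complete X -> (forall n, nowhere_dense (F n)) ->
  exists y, forall n, ~ F n y.
Proof.
  intros Hc Hnd.
  destruct (functional_choice (fun (p : nat * (X * R)) (q : X * R) => snd (snd p) > 0 ->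
    snd q > 0 /\ norm (vsub (fst q) (fst (snd p))) + snd q <= snd (snd p) /\
    snd q <= snd (snd p) / 2 /\ forall z, F (fst p) z -> snd q < norm (vsub (fst q) z)))
    as [f Hf].
  { intros [n [c r]]; cbn; destruct (Rlt_dec 0 r) as [Hr|Hr]; [|exists (c, r); lra].
    destruct (Hnd n c (r / 2)) as [y [eps [He [Hy Hfar]]]]; [lra|].
    exists (y, Rmin (r / 4) (eps / 2)); cbn; intros _.
    pose proof (Rmin_l (r / 4) (eps / 2)); pose proof (Rmin_r (r / 4) (eps / 2)).
    split; [apply Rmin_glb_lt; lra|]; split; [lra|]; split; [lra|].
    intros z Hz; specialize (Hfar z Hz); lra. }
  set (b := nat_rect (fun _ => (X * R)%type) (vzero, 1) (fun k p => f (k, p))).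
  assert (Hpos : forall k, snd (b k) > 0)
    by (induction k as [|k IH]; [cbn; lra | apply (Hf (k, b k) IH)]).
  assert (Hstep : forall k, snd (b (S k)) > 0 /\
    norm (vsub (fst (b (S k))) (fst (b k))) + snd (b (S k)) <= snd (b k) /\
    snd (b (S k)) <= snd (b k) / 2 /\ forall z, F k z -> snd (b (S k)) < norm (vsub (fst (b (S k))) z))
    by (intros k; exact (Hf (k, b k) (Hpos k))).
  assert (Hsmall : forall k, snd (b k) <= (/ 2) ^ k).
  { induction k as [|k IH]; [cbn; lra|].
    destruct (Hstep k) as [_ [_ [H _]]]; cbn in *; lra. }
  destruct (nested_balls (fun k => fst (b k)) (fun k => snd (b k)) Hc) as [l Hl].
  - intros k; apply (Hstep k).
  - intros k; pose proof (Hpos k); lra.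
  - intros eps He; destruct (half_pow_tail 1 eps) as [N HN]; [lra|auto|].
    exists N; specialize (HN N (le_n N)); pose proof (Hsmall N); lra.
  - exists l; intros n Hn.
    destruct (Hstep n) as [_ [_ [_ Hfar]]]; specialize (Hfar l Hn).
    specialize (Hl (S n)); rewrite norm_sub_sym in Hl; lra.
Qed.

Definition approx_image (A : X -> X) (s : R) (y : X) : Prop :=
  forall eps, eps > 0 -> exists x, norm x <= s /\ norm (vsub y (A x)) < eps.

Lemma image_ball_somewhere_dense (A : X -> X) : complete X ->
  (forall y, exists x, A x = y) ->
  exists s y0 rho, 0 <= s /\ rho > 0 /\ forall y, norm (vsub y y0) < rho -> approx_image A s y.
Proof.
  intros Hc Hsurj; apply NNPP; intros Hn.
  destruct (baire (fun n z => exists x, norm x <= INR n /\ A x = z) Hc) as [y Hy].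
  - intros n y0 rho Hrho; apply NNPP; intros Hnd.
    apply Hn; exists (INR n), y0, rho; split; [apply pos_INR|]; split; [auto|].
    intros y Hy eps He; apply NNPP; intros Hne.
    apply Hnd; exists y, eps; split; [auto|]; split; [auto|].
    intros z [x [Hx <-]]; apply Rnot_lt_le; intros Hlt; apply Hne; exists x; auto.
  - destruct (Hsurj y) as [x <-]; destruct (INR_unbounded (norm x)) as [n Hx].
    apply (Hy n); exists x; split; [lra|auto].
Qed.

Lemma approx_image_half_sub (A : X -> X) s y1 y2 : linear_op A ->
  approx_image A s y1 -> approx_image A s y2 -> approx_image A s (vscal (/ 2) (vsub y1 y2)).
Proof.
  intros HA H1 H2 eps He.
  destruct (H1 eps He) as [x1 [Hx1 Hr1]]; destruct (H2 eps He) as [x2 [Hx2 Hr2]].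
  exists (vscal (/ 2) (vsub x1 x2)); split.
  - rewrite norm_scal, Rabs_right by lra; pose proof (norm_sub_le x1 x2); lra.
  - replace (vsub (vscal (/ 2) (vsub y1 y2)) (A (vscal (/ 2) (vsub x1 x2))))
      with (vscal (/ 2) (vsub (vsub y1 (A x1)) (vsub y2 (A x2))))
      by (rewrite (lin_scal A HA), (lin_sub A HA); vector_eq).
    rewrite norm_scal, Rabs_right by lra.
    pose proof (norm_sub_le (vsub y1 (A x1)) (vsub y2 (A x2))); lra.
Qed.

(* By symmetry and convexity, density of the image near [y0] gives density near [0]. *)
Lemma approx_image_ball0 (A : X -> X) s y0 rho : linear_op A ->
  (forall y, norm (vsub y y0) < rho -> approx_image A s y) ->
  forall y, norm y < rho -> approx_image A s y.
Proof.
  intros HA Hball y Hy.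
  replace y with (vscal (/ 2) (vsub (vadd y0 y) (vsub y0 y))) by vector_eq.
  apply approx_image_half_sub; auto; apply Hball.
  - replace (vsub (vadd y0 y) y0) with y by vector_eq; auto.
  - replace (vsub (vsub y0 y) y0) with (vscal (-1) y) by vector_eq.
    rewrite norm_scal, Rabs_left; lra.
Qed.

Lemma approx_preimage (A : X -> X) s rho : linear_op A -> rho > 0 ->
  (forall y, norm y < rho -> approx_image A s y) ->
  forall y, exists x, norm x <= 2 * s / rho * norm y /\ norm (vsub y (A x)) <= norm y / 2.
Proof.
  intros HA Hr Hball y; destruct (classic (y = vzero)) as [->|Hy0].
  - exists vzero; rewrite (lin_zero A HA), norm_zero.
    replace (vsub vzero vzero) with (@vzero X) by vector_eq; rewrite norm_zero; lra.
  - pose proof (norm_pos y Hy0); set (a := rho / (2 * norm y)).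
    assert (Ha : 0 < a) by (apply Rdiv_lt_0_compat; lra).
    destruct (Hball (vscal a y)) with (eps := rho / 4) as [x [Hx Hres]]; [|lra|].
    { rewrite norm_scal, Rabs_right by lra; unfold a; field_simplify; lra. }
    pose proof (Rinv_0_lt_compat a Ha).
    exists (vscal (/ a) x); rewrite norm_scal, Rabs_right by lra; split.
    + replace (2 * s / rho * norm y) with (/ a * s) by (unfold a; field; lra).
      apply Rmult_le_compat_l; lra.
    + replace (vsub y (A (vscal (/ a) x))) with (vscal (/ a) (vsub (vscal a y) (A x)))
        by (rewrite (lin_scal A HA); vector_eq).
      rewrite norm_scal, Rabs_right by lra.
      replace (norm y / 2) with (/ a * (rho / 4)) by (unfold a; field; lra).
      apply Rmult_le_compat_l; lra.
Qed.

(* The preimage is the sum of the corrections [g] applied to the successive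
   residuals, which halve at each step. *)
Lemma preimage_of_approx_right_inverse (A g : X -> X) K : complete X -> bounded_linear A ->
  0 <= K -> (forall y, norm (g y) <= K * norm y /\ norm (vsub y (A (g y))) <= norm y / 2) ->
  forall y, exists x, A x = y /\ norm x <= 2 * K * norm y.
Proof.
  intros Hc HA HK Hg y; pose proof (proj1 HA) as HL; pose proof (norm_nonneg y) as Hy.
  set (s := nat_rect (fun _ => X) vzero (fun _ sk => vadd sk (g (vsub y (A sk))))).
  assert (Hres : forall k, norm (vsub y (A (s k))) <= norm y * (/ 2) ^ k).
  { induction k as [|k IH]; cbn.
    - rewrite (lin_zero A HL); replace (vsub y vzero) with y by vector_eq; lra.
    - destruct (Hg (vsub y (A (s k)))) as [_ Hgk]; fold s.
      replace (vsub y (A (vadd (s k) (g (vsub y (A (s k)))))))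
        with (vsub (vsub y (A (s k))) (A (g (vsub y (A (s k))))))
        by (rewrite (lin_add A HL); vector_eq); lra. }
  set (r := fun k => 2 * K * norm y * (/ 2) ^ k).
  assert (Hr : forall k, 0 <= r k)
    by (intros k; pose proof (pow_le (/ 2) k); unfold r; apply Rmult_le_pos; [nra|lra]).
  destruct (nested_balls s r Hc) as [l Hl]; auto.
  - intros k; cbn; fold s.
    replace (vsub (vadd (s k) (g (vsub y (A (s k))))) (s k)) with (g (vsub y (A (s k))))
      by vector_eq.
    destruct (Hg (vsub y (A (s k)))) as [Hgk _]; pose proof (Hres k); pose proof (pow_le (/ 2) k).
    unfold r; cbn; nra.
  - intros eps He; destruct (half_pow_tail (2 * K * norm y) eps) as [N HN]; [nra|auto|].
    exists N; exact (HN N (le_n N)).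
  - exists l; split.
    + destruct (bounded_linear_bound A HA) as [C [HC HAC]].
      symmetry; apply eq_of_vsub_eq0, eq0_of_norm_small; intros eps He.
      assert (HCK : 0 <= C * K) by (apply Rmult_le_pos; lra).
      destruct (half_pow_tail ((1 + 2 * (C * K)) * norm y) eps) as [k Hk];
        [apply Rmult_le_pos; lra|auto|].
      specialize (Hk k (le_n k)); specialize (Hl k); specialize (HAC (vsub l (s k))).
      pose proof (norm_triangle_sub y (A (s k)) (A l)); pose proof (Hres k).
      rewrite (lin_sub A HL), norm_sub_sym in HAC; unfold r in Hl.
      pose proof (pow_le (/ 2) k); nra.
    + specialize (Hl 0%nat); unfold r in Hl; cbn in Hl.
      replace (vsub l vzero) with l in Hl by vector_eq; lra.
Qed.

Lemma bounded_below_of_bijective (A : X -> X) : complete X -> bounded_linear A ->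
  (forall y, exists x, A x = y) -> (forall x, A x = vzero -> x = vzero) -> bounded_below A.
Proof.
  intros Hc HA Hsurj Hinj; pose proof (proj1 HA) as HL.
  destruct (image_ball_somewhere_dense A Hc Hsurj) as [s [y0 [rho [Hs [Hr Hball]]]]].
  destruct (functional_choice _ (approx_preimage A s rho HL Hr (approx_image_ball0 A s y0 rho HL Hball)))
    as [g Hg].
  set (K := 2 * s / rho).
  assert (HK : 0 <= K) by (unfold K; apply Rmult_le_pos; [lra | apply Rlt_le, Rinv_0_lt_compat; lra]).
  pose proof (preimage_of_approx_right_inverse A g K Hc HA HK Hg) as Hpre.
  exists (/ (2 * K + 1)); split; [apply Rinv_0_lt_compat; lra|]; intros x.
  destruct (Hpre (A x)) as [x' [Hx' Hbound]].
  replace x' with x in Hbound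
    by (symmetry; apply eq_of_vsub_eq0, Hinj; rewrite (lin_sub A HL), Hx'; vector_eq).
  apply Rmult_le_reg_l with (2 * K + 1); [lra|].
  rewrite <- Rmult_assoc, Rinv_r, Rmult_1_l by lra; pose proof (norm_nonneg (A x)); nra.
Qed.

Lemma opnorm_lub (T : X -> X) M : 0 <= M -> (forall x, norm (T x) <= M * norm x) ->
  is_lub (opnorm_set T) (opnorm T) /\ opnorm T <= M.
Proof.
  intros HM HT.
  assert (Hub : is_upper_bound (opnorm_set T) M).
  { intros r [x [Hx ->]]; eapply Rle_trans; [apply HT|]; pose proof (norm_nonneg x); nra. }
  assert (Hlub : is_lub (opnorm_set T) (opnorm T)).
  { apply (epsilon_spec (inhabits 0) (fun c => is_lub (opnorm_set T) c)).
    destruct (completeness (opnorm_set T)) as [L HL]; [exists M; exact Hub| |exists L; exact HL].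
    exists (norm (T vzero)), vzero; split; [rewrite norm_zero; lra | reflexivity]. }
  split; [exact Hlub | apply Hlub, Hub].
Qed.

Lemma opnorm_nonneg (T : X -> X) : bounded_linear T -> 0 <= opnorm T.
Proof.
  intros HT; destruct (bounded_linear_bound T HT) as [C [HC HTC]].
  destruct (opnorm_lub T C) as [[Hub _] _]; [lra|auto|].
  apply Hub; exists vzero; split; [rewrite norm_zero; lra|].
  rewrite (lin_zero T (proj1 HT)), norm_zero; reflexivity.
Qed.

Lemma opnorm_bound (T : X -> X) : bounded_linear T -> forall w, norm (T w) <= opnorm T * norm w.
Proof.
  intros HT w; destruct (bounded_linear_bound T HT) as [C [HC HTC]].
  destruct (opnorm_lub T C) as [[Hub _] _]; [lra|auto|].
  destruct (classic (w = vzero)) as [->|Hw].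
  - rewrite (lin_zero T (proj1 HT)), norm_zero; lra.
  - pose proof (norm_pos w Hw) as Hpos; pose proof (Rinv_0_lt_compat _ Hpos).
    assert (H1 : norm (T (vscal (/ norm w) w)) <= opnorm T).
    { apply Hub; exists (vscal (/ norm w) w); split; [|reflexivity].
      rewrite norm_scal, Rabs_right, Rinv_l; lra. }
    rewrite (lin_scal T (proj1 HT)), norm_scal, Rabs_right in H1 by lra.
    apply Rmult_le_compat_l with (r := norm w) in H1; [|lra].
    rewrite <- Rmult_assoc, Rinv_r, Rmult_1_l in H1 by lra; lra.
Qed.

Lemma norm_le_norm_shift (A : X -> X) a x : monotone A -> 0 <= a ->
  norm (A x) <= norm (shift A a x).
Proof.
  intros Hm Ha; apply norm_le_of_sq; [apply norm_nonneg|]; unfold shift.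
  rewrite !norm_sq; autorewrite with inner; rewrite (inner_sym X x (A x)).
  pose proof (Hm x); pose proof (inner_pos X x); nra.
Qed.

Lemma norm_shift_ge (A : X -> X) a x : monotone A -> 0 <= a ->
  a * norm x <= norm (shift A a x).
Proof.
  intros Hm Ha; pose proof (cauchy_schwarz (shift A a x) x) as Hcs; unfold shift in *.
  autorewrite with inner in Hcs; rewrite <- norm_sq in Hcs.
  pose proof (Hm x); pose proof (norm_nonneg x); pose proof (norm_nonneg (vadd (A x) (vscal a x))).
  destruct (Req_dec (norm x) 0) as [->|Hx]; [lra|nra].
Qed.

Lemma resolvent_opnorm_le (A Ainv B : X -> X) a : monotone A -> is_inverse A Ainv ->
  bounded_linear Ainv -> a > 0 -> is_inverse (shift A a) B -> opnorm B <= opnorm Ainv.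
Proof.
  intros Hm [HAinv _] HAi Ha [_ HB].
  apply (opnorm_lub B (opnorm Ainv) (opnorm_nonneg _ HAi)); intros z.
  rewrite <- (HB z) at 2.
  pose proof (opnorm_bound _ HAi (A (B z))) as H; rewrite HAinv in H.
  pose proof (norm_le_norm_shift A a (B z) Hm (Rlt_le _ _ Ha)).
  pose proof (opnorm_nonneg _ HAi); nra.
Qed.

(* Along almost-kernel vectors, (A + aI) x ~ a x, so the bound 1/a on (A + aI)^-1 is attained. *)
Lemma resolvent_opnorm_eq (A B : X -> X) a : linear_op A -> monotone A -> ~ bounded_below A ->
  a > 0 -> is_inverse (shift A a) B -> opnorm B = 1 / a.
Proof.
  intros HA Hm HnB Ha [HBA HAB].
  assert (HBL : linear_op B) by (apply (inverse_linear (shift A a)); [apply shift_linear | split]; auto).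
  assert (Hup : forall z, norm (B z) <= / a * norm z).
  { intros z; rewrite <- (HAB z) at 2; pose proof (norm_shift_ge A a (B z) Hm (Rlt_le _ _ Ha)).
    apply Rmult_le_reg_l with a; [lra|].
    rewrite <- Rmult_assoc, Rinv_r, Rmult_1_l; lra. }
  assert (HBb : bounded_linear B) by (split; [|exists (/ a)]; auto).
  destruct (opnorm_lub B (/ a)) as [_ Hle]; [apply Rlt_le, Rinv_0_lt_compat; lra|auto|].
  assert (Hge : 1 <= opnorm B * a).
  { apply Rle_plus_epsilon; intros eps He.
    pose proof (opnorm_nonneg B HBb) as Hq.
    destruct (not_bounded_below_small_value A (eps / (opnorm B + 1)) 1) as [x [Hx1 Hx]];
      auto; [apply Rdiv_lt_0_compat; lra | lra |].
    pose proof (opnorm_bound B HBb (shift A a x)) as Hbx; rewrite HBA, Hx1 in Hbx.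
    pose proof (norm_triangle (A x) (vscal a x)) as T; rewrite norm_scal, Rabs_right, Hx1 in T by lra.
    unfold shift in Hbx.
    assert (opnorm B * (eps / (opnorm B + 1)) <= eps).
    { replace (opnorm B * (eps / (opnorm B + 1))) with (eps * (opnorm B / (opnorm B + 1)))
        by (field; lra).
      assert (opnorm B / (opnorm B + 1) <= 1)
        by (apply Rmult_le_reg_r with (opnorm B + 1); [lra|]; field_simplify; lra).
      nra. }
    nra. }
  apply Rle_antisym; [unfold Rdiv; lra|].
  apply Rmult_le_reg_r with a; [lra|]; unfold Rdiv; rewrite Rmult_1_l, Rinv_l; lra.
Qed.

Lemma well_posed_everywhere_iff (A : X -> X) : linear_op A ->
  (forall xd, locally_well_posed A xd) <-> bounded_below A.
Proof.
  intros HA; split.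
  - intros H; exact (bounded_below_of_locally_well_posed A vzero HA (H vzero)).
  - intros HB xd; exact (locally_well_posed_of_bounded_below A xd HA HB).
Qed.

Lemma ill_posed_everywhere_iff (A : X -> X) : linear_op A ->
  (forall xd, locally_ill_posed A xd) <-> ~ bounded_below A.
Proof.
  intros HA; split.
  - intros H HB; exact (H vzero (locally_well_posed_of_bounded_below A vzero HA HB)).
  - intros HnB xd Hw; exact (HnB (bounded_below_of_locally_well_posed A xd HA Hw)).
Qed.

Lemma cont_invertible_iff_bounded_below (A : X -> X) : complete X -> bounded_linear A ->
  monotone A -> cont_invertible A <-> bounded_below A.
Proof.
  intros Hc HA Hm; split; [apply bounded_below_of_cont_invertible|intros HB].
  apply cont_invertible_of_bijective_bounded_below; auto; [apply HA|].
  apply surjective_of_monotone_closed_range; auto; [apply HA | | ].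
  - apply bounded_below_injective; auto.
  - apply closed_range_of_bounded_below; auto.
Qed.

Lemma not_bounded_below_iff (A : X -> X) : complete X -> bounded_linear A -> monotone A ->
  (null_space_nontrivial A \/ ~ is_closed (op_range A)) <-> ~ bounded_below A.
Proof.
  intros Hc HA Hm; split.
  - intros [[x [Hx0 Hx]] | Hcl] HB.
    + exact (Hx0 (bounded_below_injective A HB x Hx)).
    + exact (Hcl (closed_range_of_bounded_below A Hc HA HB)).
  - intros HnB; apply NNPP; intros H; apply HnB.
    assert (Hinj : forall x, A x = vzero -> x = vzero).
    { intros x Hx; apply NNPP; intros Hx0; apply H; left; exists x; auto. }
    assert (Hcl : is_closed (op_range A)) by (apply NNPP; tauto).
    apply bounded_below_of_bijective; auto.
    apply surjective_of_monotone_closed_range; auto; apply HA.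
Qed.

End Hilbert.

Theorem proposition1p3 (X : InnerProductSpace)
  (Hcomplete : complete X) (Hsep : separable X)
  (A : X -> X) (HA : bounded_linear A) (Hmon : monotone A) :
  (* (a) *)
  (((forall xd : X, locally_well_posed A xd) <-> cont_invertible A) /\
   (forall Ainv : X -> X, is_inverse A Ainv -> bounded_linear Ainv ->
      forall alpha : R, alpha > 0 ->
      forall B : X -> X, is_inverse (shift A alpha) B ->
        opnorm B <= opnorm Ainv)) /\
  (* (b) *)
  (((forall xd : X, locally_ill_posed A xd) <->
      (null_space_nontrivial A \/ ~ is_closed (op_range A))) /\
   ((null_space_nontrivial A \/ ~ is_closed (op_range A)) ->
      forall alpha : R, alpha > 0 ->
      forall B : X -> X, is_inverse (shift A alpha) B ->
        opnorm B = 1 / alpha)) /\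
  (* exactly one of (a), (b) occurs *)
  (((forall xd : X, locally_well_posed A xd) /\ ~ (forall xd : X, locally_ill_posed A xd)) \/
   (~ (forall xd : X, locally_well_posed A xd) /\ (forall xd : X, locally_ill_posed A xd))).
Proof.
  pose proof (well_posed_everywhere_iff A (proj1 HA)) as Hwell.
  pose proof (ill_posed_everywhere_iff A (proj1 HA)) as Hill.
  pose proof (cont_invertible_iff_bounded_below A Hcomplete HA Hmon) as Hinv.
  pose proof (not_bounded_below_iff A Hcomplete HA Hmon) as Hdegenerate.
  split; [split|split; [split|]].
  - tauto.
  - intros Ainv HAinv HAi alpha Ha B HB; exact (resolvent_opnorm_le A Ainv B alpha Hmon HAinv HAi Ha HB).
  - tauto.
  - intros H alpha Ha B HB; apply (resolvent_opnorm_eq A B alpha (proj1 HA) Hmon); tauto.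
  - destruct (classic (bounded_below A)); tauto.
Qed.
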